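(* Let robots $i$ and $j$ be neighbors. Let $\Theta_{ij}\in\mathbb{R}^7$ be the unknown constant parameter vector described in the context, and let the estimate $\hat\Theta_{ij}$ be generated by the concurrent-learning update described in the context, starting from an arbitrary initial estimate $\hat\Theta_{ij}(t_0)\in\mathbb{R}^7$. Assume that the recorded data matrix $S_{ij}=\mathbf{R}_{ij}\mathbf{R}_{ij}^T\in\mathbb{R}^{7\times 7}$ is full rank. Then the estimation error $\tilde\Theta_{ij}(t_k)=\hat\Theta_{ij}(t_k)-\Theta_{ij}$ is globally exponentially stable: there exist constants $c\ge 1$ and $\rho\in(0,1)$, independent of $\hat\Theta_{ij}(t_0)$, such that $\|\tilde\Theta_{ij}(t_k)\|\le c\,\rho^k\|\tilde\Theta_{ij}(t_0)\|$ for all $k\in\mathbb{N}$.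
   Context: Setting: nonholonomic robots, each with its own odometry frame $\mathcal{O}_i$ (with $x$-axis equal to the robot's initial heading), moving with 4-DoF kinematics (planar position, height, yaw). At sampling instants $t_k=k\Delta t$, $k\in\mathbb{N}$, robot $i$ measures with UWB the distance $d_{ij}(t_k)=\|\mathbf{p}^{\mathcal{O}_i}_i(t_k)-\mathbf{p}^{\mathcal{O}_i}_j(t_k)\|$ to its neighbor $j$, and both robots know their own inertial-odometry displacements $\mathbf{p}^{\mathcal{O}_i}_i(t_k)$, $\mathbf{p}^{\mathcal{O}_j}_j(t_k)$ (exchanged by communication). Using the cosine theorem on two consecutive samples, these measurements yield at each $t_k$ a scalar $y_{ij}(t_k)$ and a unit vector $\Phi_{ij}(t_k)=\Psi_{ij}(t_k)/\|\Psi_{ij}(t_k)\|\in\mathbb{R}^7$ (with $\Psi_{ij}(t_k)\neq 0$ a vector computed from the measured displacements) satisfying the linear regression $y_{ij}(t_k)=\Theta_{ij}^T\Phi_{ij}(t_k)$, where $\Theta_{ij}\in\mathbb{R}^7$ is a constant unknown vector whose first three entries are the initial relative position $\mathbf{p}^{\mathcal{O}_i}_{ij}(t_0)$ of the robots in frame $\mathcal{O}_i$ and whose 6th and 7th entries are $\cos\theta$ and $\sin\theta$, $\theta$ being the initial relative yaw between frames $\mathcal{O}_j$ and $\mathcal{O}_i$. Recorded data: a finite set of previously sampled unit regressors $\Phi_{ij}(s_1),\dots,\Phi_{ij}(s_\varsigma)$ with corresponding outputs $y_{ij}(s_m)=\Theta_{ij}^T\Phi_{ij}(s_m)$; $\mathbf{R}_{ij}=[\Phi_{ij}(s_1),\dots,\Phi_{ij}(s_\varsigma)]$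 and $S_{ij}=\mathbf{R}_{ij}\mathbf{R}_{ij}^T$. Also $U_{ij}(t_k)=\Phi_{ij}(t_k)\Phi_{ij}(t_k)^T$. Estimator: $\hat\Theta_{ij}(t)=\hat\Theta_{ij}(t_k)$ for $t_k<t\le t_{k+1}$ and $\hat\Theta_{ij}(t_{k+1})=\hat\Theta_{ij}(t_k)-\eta\sum_{m=1}^{\varsigma}\Phi_{ij}(s_m)\epsilon_{ij}(s_m)-\eta\,\Phi_{ij}(t_k)\epsilon_{ij}(t_k)$, where the innovations are $\epsilon_{ij}(s)=\hat\Theta_{ij}(t_k)^T\Phi_{ij}(s)-y_{ij}(s)$ and the learning rate is $\eta=\dfrac{\lambda_{\min}(S_{ij})}{\lambda_{\max}(U_{ij}(t_k))+\lambda_{\max}(S_{ij})^2}$ ($\lambda_{\min},\lambda_{\max}$ denote smallest/largest eigenvalues). *)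

From mathcomp Require Import all_boot all_order all_algebra.
From mathcomp Require Import boolp classical_sets reals.
Set Implicit Arguments. Unset Strict Implicit. Unset Printing Implicit Defensive.
Import Order.TTheory GRing.Theory Num.Theory.
Local Open Scope ring_scope.
Local Open Scope classical_set_scope.

Definition vnorm {R : realType} {n : nat} (v : 'cV[R]_n) : R :=
  Num.sqrt (\sum_(i < n) v i 0 ^+ 2).

Definition dotv {R : realType} {n : nat} (a b : 'cV[R]_n) : R := (a^T *m b) 0 0.

Definition lambda_min {R : realType} {n : nat} (A : 'M[R]_n) : R :=
  inf [set a : R | eigenvalue A a].
Definition lambda_max {R : realType} {n : nat} (A : 'M[R]_n) : R :=
  sup [set a : R | eigenvalue A a].

Definition rec_mx {R : realType} {n vs : nat} (Phis : 'I_vs -> 'cV[R]_n)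
  : 'M[R]_(n, vs) := \matrix_(i < n, m < vs) Phis m i 0.

Definition S_mx {R : realType} {n vs : nat} (Phis : 'I_vs -> 'cV[R]_n) : 'M[R]_n :=
  rec_mx Phis *m (rec_mx Phis)^T.

Definition U_mx {R : realType} {n : nat} (phi : 'cV[R]_n) : 'M[R]_n := phi *m phi^T.

Definition cl_eta {R : realType} {n vs : nat} (Phis : 'I_vs -> 'cV[R]_n)
  (phi : 'cV[R]_n) : R :=
  lambda_min (S_mx Phis) / (lambda_max (U_mx phi) + lambda_max (S_mx Phis) ^+ 2).

Fixpoint cl_est {R : realType} {n vs : nat}
  (Phis : 'I_vs -> 'cV[R]_n) (ys : 'I_vs -> R)
  (Phi : nat -> 'cV[R]_n) (y : nat -> R) (theta0 : 'cV[R]_n) (k : nat) : 'cV[R]_n :=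
  match k with
  | 0 => theta0
  | k'.+1 =>
      let th := cl_est Phis ys Phi y theta0 k' in
      let eta := cl_eta Phis (Phi k') in
      th - eta *: (\sum_(m < vs) (dotv th (Phis m) - ys m) *: Phis m)
         - eta *: ((dotv th (Phi k') - y k') *: Phi k')
  end.

From mathcomp Require Import all_boot all_order all_algebra.
From mathcomp Require Import classical_sets reals.
From mathcomp Require Import ring lra.
Import Order.TTheory GRing.Theory Num.Theory.
Local Open Scope ring_scope.
Set Implicit Arguments. Unset Strict Implicit. Unset Printing Implicit Defensive.

(* The error e_k = hat Theta(t_k) - Theta obeys e_{k+1} = e_k - eta M_k e_k with
   M_k = S + U_k symmetric and a I <= M_k <= (b + 1) I, where a = lambda_min S > 0
   (S is positive semidefinite and invertible) and b = lambda_max S.  Expanding the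
   square and using |M e|^2 <= (b + 1) e^T M e gives the one-step contraction
   |e_{k+1}|^2 <= (1 - eta (2 - eta (b + 1)) a) |e_k|^2, whose rate lies in (0, 1)
   because eta (b + 1) < 2.  Since lambda_min and lambda_max are defined through the
   real spectrum, they are identified with the extreme values of the Rayleigh quotient
   of a real symmetric matrix, which are attained as eigenvalues. *)

Definition sqnorm {R : pzRingType} {n} (x : 'cV[R]_n) : R := (x^T *m x) 0 0.
Definition bform {R : pzRingType} {n} (A : 'M[R]_n) (x y : 'cV[R]_n) : R :=
  (x^T *m A *m y) 0 0.
Definition qform {R : pzRingType} {n} (A : 'M[R]_n) (x : 'cV[R]_n) : R := bform A x x.

Lemma sqnorm_mulmx (R : comPzRingType) m n (B : 'M[R]_(m, n)) (x : 'cV[R]_n) :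
  sqnorm (B *m x) = qform (B^T *m B) x.
Proof. by rewrite /sqnorm /qform /bform trmx_mul !mulmxA. Qed.

Lemma discriminant_le0 (R : realFieldType) (a b c : R) : 0 <= a ->
  (forall t, 0 <= a * t ^+ 2 + 2 * b * t + c) -> b ^+ 2 <= a * c.
Proof.
move=> a_ge0 pos; have [a0|a_neq0] := eqVneq a 0.
  have [b0|b_neq0] := eqVneq b 0; first by rewrite a0 b0 expr0n mul0r.
  have := pos (- (c + 1) / (2 * b)); rewrite a0 mul0r add0r.
  have -> : 2 * b * (- (c + 1) / (2 * b)) = - (c + 1) by field.
  lra.
have a_gt0 : 0 < a by rewrite lt_def a_neq0.
have := pos (- b / a).
have -> : a * (- b / a) ^+ 2 + 2 * b * (- b / a) + c = c - b ^+ 2 / a by field.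
by rewrite subr_ge0 ler_pdivrMr // mulrC.
Qed.

Section QuadraticForms.
Variables (R : realFieldType) (n : nat).
Implicit Types (A B : 'M[R]_n) (x y : 'cV[R]_n).

Lemma sqnormE x : sqnorm x = \sum_i x i 0 ^+ 2.
Proof. by rewrite /sqnorm mxE; apply: eq_bigr => i _; rewrite !mxE expr2. Qed.

Lemma sqnorm_ge0 x : 0 <= sqnorm x.
Proof. by rewrite sqnormE; apply: sumr_ge0 => i _; apply: sqr_ge0. Qed.

Lemma sqr_coord_le_sqnorm x i : x i 0 ^+ 2 <= sqnorm x.
Proof. by rewrite sqnormE (bigD1 i) //= lerDl sumr_ge0 // => j _; apply: sqr_ge0. Qed.

Lemma sqnorm_eq0 x : (sqnorm x == 0) = (x == 0).
Proof.
apply/idP/eqP => [/eqP x0|->]; last by rewrite /sqnorm mulmx0 mxE.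
apply/matrixP => i j; rewrite (ord1 j) mxE; apply/eqP.
by rewrite -sqrf_eq0 eq_le sqr_ge0 andbT -x0 sqr_coord_le_sqnorm.
Qed.

Lemma sqnorm_gt0 x : (0 < sqnorm x) = (x != 0).
Proof. by rewrite lt_def sqnorm_eq0 sqnorm_ge0 andbT. Qed.

Lemma bformE A x y : bform A x y = \sum_j \sum_i x i 0 * A i j * y j 0.
Proof.
rewrite /bform mxE; apply: eq_bigr => j _; rewrite mxE mulr_suml.
by apply: eq_bigr => i _; rewrite !mxE.
Qed.

Lemma bformC A x y : A^T = A -> bform A x y = bform A y x.
Proof.
move=> symA; rewrite !bformE exchange_big; apply: eq_bigr => i _; apply: eq_bigr => j _.
have -> : A j i = A i j by rewrite -[in LHS]symA mxE.
by rewrite mulrC [x i 0 * _]mulrC mulrA.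
Qed.

Lemma bformDl A x y z : bform A (x + y) z = bform A x z + bform A y z.
Proof. by rewrite /bform linearD /= !mulmxDl mxE. Qed.

Lemma bformDr A x y z : bform A x (y + z) = bform A x y + bform A x z.
Proof. by rewrite /bform mulmxDr mxE. Qed.

Lemma bformZl A t x y : bform A (t *: x) y = t * bform A x y.
Proof. by rewrite /bform linearZ /= -!scalemxAl mxE. Qed.

Lemma bformZr A t x y : bform A x (t *: y) = t * bform A x y.
Proof. by rewrite /bform -scalemxAr mxE. Qed.

Lemma bform1 x y : bform 1%:M x y = (x^T *m y) 0 0.
Proof. by rewrite /bform mulmx1. Qed.

Lemma bform1_mulmx A x y : bform 1%:M x (A *m y) = bform A x y.
Proof. by rewrite bform1 mulmxA. Qed.

Lemma qform1 x : qform 1%:M x = sqnorm x.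
Proof. exact: bform1. Qed.

Lemma qformD A B x : qform (A + B) x = qform A x + qform B x.
Proof. by rewrite /qform /bform mulmxDr mulmxDl mxE. Qed.

Lemma qformN A x : qform (- A) x = - qform A x.
Proof. by rewrite /qform /bform mulmxN mulNmx mxE. Qed.

Lemma qform_scalar t x : qform t%:M x = t * sqnorm x.
Proof. by rewrite /qform /bform mul_mx_scalar -scalemxAl mxE. Qed.

Lemma qformB_scalar A t x : qform (A - t%:M) x = qform A x - t * sqnorm x.
Proof. by rewrite qformD qformN qform_scalar. Qed.

Lemma qformDZ A x y t : A^T = A ->
  qform A (x + t *: y) = qform A x + 2 * t * bform A y x + t ^+ 2 * qform A y.
Proof.
by move=> symA; rewrite /qform bformDl !bformDr !bformZl !bformZr (bformC x y symA); ring.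
Qed.

Lemma bform_CauchySchwarz A x y : A^T = A -> (forall z, 0 <= qform A z) ->
  bform A x y ^+ 2 <= qform A x * qform A y.
Proof.
move=> symA psdA; apply: discriminant_le0 => // t.
by rewrite (_ : _ + _ = qform A (y + t *: x)) // qformDZ //; ring.
Qed.

Lemma sqnorm_mulmx_le A c : A^T = A -> (forall z, 0 <= qform A z) -> 0 <= c ->
  (forall z, qform A z <= c * sqnorm z) -> forall x, sqnorm (A *m x) <= c * qform A x.
Proof.
move=> symA psdA c0 Ac x; set p := sqnorm (A *m x).
have CS : p ^+ 2 <= qform A (A *m x) * qform A x.
  by rewrite /p -qform1 /qform bform1_mulmx bform_CauchySchwarz.
have [p0|p_gt0] := eqVneq p 0; first by rewrite p0 mulr_ge0.
have {}p_gt0 : 0 < p by rewrite lt_def p_gt0 sqnorm_ge0.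
rewrite -(ler_pM2l p_gt0) mulrA -expr2; apply: le_trans CS _.
by rewrite ler_wpM2r // mulrC.
Qed.

Lemma qform_le_sqnorm A : exists2 K, 0 < K & forall x, qform A x <= K * sqnorm x.
Proof.
exists (\sum_i \sum_j `|A i j| + 1).
  by rewrite ltr_wpDl // sumr_ge0 // => i _; rewrite sumr_ge0.
move=> x; rewrite mulrDl mul1r ler_wpDr ?sqnorm_ge0 // /qform bformE exchange_big.
rewrite mulr_suml; apply: ler_sum => i _; rewrite mulr_suml; apply: ler_sum => j _.
have xij_le : `|x i 0 * x j 0| <= sqnorm x.
  have := sqr_coord_le_sqnorm x i; have := sqr_coord_le_sqnorm x j.
  have := sqr_ge0 (x i 0 - x j 0); have := sqr_ge0 (x i 0 + x j 0).
  rewrite ler_norml; nra.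
apply: le_trans (ler_norm _) _.
by rewrite mulrAC normrM mulrC ler_wpM2l.
Qed.

Lemma qform_coercive A : A^T = A -> (forall z, 0 <= qform A z) -> A \in unitmx ->
  exists2 eps, 0 < eps & forall x, eps * sqnorm x <= qform A x.
Proof.
move=> symA psdA A_unit.
have [K K_gt0 AK] := qform_le_sqnorm A.
have [C C_gt0 invAC] := qform_le_sqnorm ((invmx A)^T *m invmx A).
exists (C * K)^-1 => [|x]; first by rewrite invr_gt0 mulr_gt0.
have -> : sqnorm x = sqnorm (invmx A *m (A *m x)) by rewrite mulKmx.
rewrite mulrC ler_pdivrMr ?mulr_gt0 // sqnorm_mulmx; apply: le_trans (invAC _) _.
rewrite [qform A x * _]mulrC -mulrA ler_wpM2l ?(ltW C_gt0) //.
exact: sqnorm_mulmx_le symA psdA (ltW K_gt0) AK x.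
Qed.

Lemma sqnorm_gradient_step_le M a c eta x : M^T = M ->
  (forall z, a * sqnorm z <= qform M z) -> (forall z, qform M z <= c * sqnorm z) ->
  0 <= a -> 0 <= c -> 0 <= eta -> eta * c <= 2 ->
  sqnorm (x - eta *: (M *m x)) <= (1 - eta * (2 - eta * c) * a) * sqnorm x.
Proof.
move=> symM a_le le_c a_ge0 c_ge0 eta_ge0 eta_c_le2.
have psdM z : 0 <= qform M z by apply: le_trans (a_le z); rewrite mulr_ge0 ?sqnorm_ge0.
have Mx_le := sqnorm_mulmx_le symM psdM c_ge0 le_c x.
have cross : bform 1%:M (M *m x) x = qform M x.
  by rewrite bformC ?tr_scalar_mx // bform1_mulmx.
rewrite -scaleNr -qform1 qformDZ ?tr_scalar_mx // cross !qform1 sqrrN.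
have h1 := ler_wpM2l (sqr_ge0 eta) Mx_le.
have gain_ge0 : 0 <= eta * (2 - eta * c) by rewrite mulr_ge0 // subr_ge0.
have h2 := ler_wpM2l gain_ge0 (a_le x).
lra.
Qed.

End QuadraticForms.

Section SymmetricSpectrum.
Variables (R : realType) (n : nat).
Implicit Types (A : 'M[R]_n.+1) (x : 'cV[R]_n.+1).
Local Open Scope classical_set_scope.

Lemma eigenvalue_qform A l : A^T = A -> eigenvalue A l ->
  exists2 x, x != 0 & qform A x = l * sqnorm x.
Proof.
move=> symA /eigenvalueP[v vA v_neq0]; exists v^T.
  by apply: contra v_neq0 => /eqP v0; rewrite -[v]trmxK v0 linear0.
have Av : A *m v^T = l *: v^T by rewrite -symA -trmx_mul vA linearZ.
by rewrite /qform /bform -mulmxA Av -scalemxAr mxE.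
Qed.

Lemma unitmx_notin_spectrum A l : ~~ eigenvalue A l -> A - l%:M \in unitmx.
Proof. by rewrite negbK -row_free_unit -kermx_eq0. Qed.

Lemma exists_eigenvalue_lower A : A^T = A ->
  exists2 l, eigenvalue A l & forall x, l * sqnorm x <= qform A x.
Proof.
(* If the infimum m of the Rayleigh quotient were not an eigenvalue, A - m I would be
   positive semidefinite and invertible, hence coercive, and m would not be the infimum. *)
move=> symA; pose E := [set qform A x / sqnorm x | x in [set x | x != 0]].
have E_lb : has_lbound E.
  have [K K_gt0 AK] := qform_le_sqnorm (- A).
  exists (- K) => _ [x /= x_neq0 <-]; rewrite ler_pdivlMr ?sqnorm_gt0 //.
  by have := AK x; rewrite qformN; lra.
have E_ne : E !=set0.
  pose x1 : 'cV[R]_n.+1 := const_mx 1.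
  exists (qform A x1 / sqnorm x1), x1 => //=.
  by apply/eqP => /matrixP /(_ 0 0) /eqP; rewrite !mxE oner_eq0.
have inf_le x : inf E * sqnorm x <= qform A x.
  have [->|x_neq0] := eqVneq x 0; first by rewrite /qform /bform /sqnorm !mulmx0 mxE mulr0.
  by rewrite -ler_pdivlMr ?sqnorm_gt0 //; apply: ge_inf => //; exists x.
exists (inf E) => //.
have [//|/unitmx_notin_spectrum T_unit] := boolP (eigenvalue A (inf E)).
have symT : (A - (inf E)%:M)^T = A - (inf E)%:M by rewrite linearB /= tr_scalar_mx symA.
have psdT z : 0 <= qform (A - (inf E)%:M) z by rewrite qformB_scalar subr_ge0.
have [eps eps_gt0 Teps] := qform_coercive symT psdT T_unit.
suff : inf E + eps <= inf E by lra.
apply: lb_le_inf => // _ [x /= x_neq0 <-]; rewrite ler_pdivlMr ?sqnorm_gt0 //.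
by have := Teps x; rewrite qformB_scalar; lra.
Qed.

Lemma exists_eigenvalue_upper A : A^T = A ->
  exists2 l, eigenvalue A l & forall x, qform A x <= l * sqnorm x.
Proof.
move=> symA; have symNA : (- A)^T = - A by rewrite linearN /= symA.
have [l /eigenvalueP[v vA v_neq0] l_le] := exists_eigenvalue_lower symNA.
exists (- l) => [|x]; last by have := l_le x; rewrite qformN; lra.
by apply/eigenvalueP; exists v; rewrite // scaleNr -vA mulmxN opprK.
Qed.

Lemma lower_bound_le_eigenvalue A l m : A^T = A ->
  (forall x, l * sqnorm x <= qform A x) -> eigenvalue A m -> l <= m.
Proof.
move=> symA l_le /(eigenvalue_qform symA)[x x_neq0 xA].
by rewrite -(@ler_pM2r _ (sqnorm x)) ?sqnorm_gt0 // -xA.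
Qed.

Lemma eigenvalue_le_upper_bound A l m : A^T = A ->
  (forall x, qform A x <= l * sqnorm x) -> eigenvalue A m -> m <= l.
Proof.
move=> symA le_l /(eigenvalue_qform symA)[x x_neq0 xA].
by rewrite -(@ler_pM2r _ (sqnorm x)) ?sqnorm_gt0 // -xA.
Qed.

Lemma lambda_minP A : A^T = A ->
  eigenvalue A (lambda_min A) /\ forall x, lambda_min A * sqnorm x <= qform A x.
Proof.
move=> symA; have [l l_eig l_le] := exists_eigenvalue_lower symA.
suff -> : lambda_min A = l by [].
apply/le_anti; rewrite ge_inf //=; last by exists l => m; apply: lower_bound_le_eigenvalue.
by rewrite lb_le_inf //; [exists l | move=> m; apply: lower_bound_le_eigenvalue].
Qed.

Lemma lambda_maxP A : A^T = A ->
  eigenvalue A (lambda_max A) /\ forall x, qform A x <= lambda_max A * sqnorm x.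
Proof.
move=> symA; have [l l_eig le_l] := exists_eigenvalue_upper symA.
suff -> : lambda_max A = l by [].
apply/le_anti; rewrite ub_le_sup ?andbT //=; last first.
  by exists l => m; apply: eigenvalue_le_upper_bound.
by rewrite ge_sup //; [exists l | move=> m; apply: eigenvalue_le_upper_bound].
Qed.

Lemma lambda_min_gt0 A : A^T = A -> (forall x, 0 <= qform A x) -> A \in unitmx ->
  0 < lambda_min A.
Proof.
move=> symA psdA A_unit; have [min_eig _] := lambda_minP symA.
rewrite lt_def (lower_bound_le_eigenvalue (l := 0) symA) ?andbT // => [|x].
  apply: contraTneq min_eig => ->.
  by rewrite /eigenvalue /eigenspace negbK raddf0 subr0 kermx_eq0 row_free_unit.
by rewrite mul0r.
Qed.

End SymmetricSpectrum.

Lemma vnormE (R : realType) n (x : 'cV[R]_n) : vnorm x = Num.sqrt (sqnorm x).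
Proof. by rewrite sqnormE. Qed.

Lemma sqnorm_vnorm1 (R : realType) n (x : 'cV[R]_n) : vnorm x = 1 -> sqnorm x = 1.
Proof. by rewrite vnormE -{2}(sqr_sqrtr (sqnorm_ge0 x)) => ->; rewrite expr1n. Qed.

Lemma vnorm_geometric_decay (R : realType) n (e : nat -> 'cV[R]_n) r : 0 <= r ->
  (forall k, sqnorm (e k.+1) <= r * sqnorm (e k)) ->
  forall k, vnorm (e k) <= Num.sqrt r ^+ k * vnorm (e 0).
Proof.
move=> r_ge0 step; elim=> [|k IH]; first by rewrite expr0 mul1r.
rewrite exprS -mulrA; apply: le_trans _ (ler_wpM2l (sqrtr_ge0 r) IH).
by rewrite !vnormE -sqrtrM // ler_sqrt // mulr_ge0 ?sqnorm_ge0.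
Qed.

Section ConcurrentLearning.
Variables (R : realType) (n : nat).
Implicit Types (x P : 'cV[R]_n).

Lemma dotvBl x y P : dotv x P - dotv y P = dotv (x - y) P.
Proof.
by rewrite /dotv linearB /= mulmxBl; set u := x^T *m P; set v := y^T *m P; rewrite !mxE.
Qed.

Lemma dotv_scale_U_mx x P : dotv x P *: P = U_mx P *m x.
Proof.
apply/matrixP => i j; rewrite (ord1 j) /U_mx -mulmxA !mxE big_ord1 mulrC; congr (_ * _).
by rewrite /dotv !mxE; apply: eq_bigr => l _; rewrite !mxE mulrC.
Qed.

Lemma qform_U_mx P x : qform (U_mx P) x = bform 1%:M P x ^+ 2.
Proof.
rewrite /qform /bform /U_mx mulmx1 !mulmxA -(mulmxA (x^T *m P)) mxE big_ord1 expr2.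
by rewrite -[x^T *m P]trmxK trmx_mul trmxK [X in X * _]mxE.
Qed.

Lemma U_mx_sym P : (U_mx P)^T = U_mx P.
Proof. by rewrite /U_mx trmx_mul trmxK. Qed.

Lemma qform_U_mx_le P x : vnorm P = 1 -> qform (U_mx P) x <= sqnorm x.
Proof.
move=> /sqnorm_vnorm1 P1; rewrite qform_U_mx -[sqnorm x]mul1r -[X in X * _]P1 -!qform1.
by apply: bform_CauchySchwarz => [|z]; rewrite ?tr_scalar_mx ?qform1 ?sqnorm_ge0.
Qed.

Lemma S_mx_sum vs (Phis : 'I_vs -> 'cV[R]_n) : S_mx Phis = \sum_m U_mx (Phis m).
Proof.
apply/matrixP => i j; rewrite /S_mx /rec_mx !mxE summxE.
by apply: eq_bigr => m _; rewrite !mxE big_ord1 !mxE.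
Qed.

Lemma S_mx_sym vs (Phis : 'I_vs -> 'cV[R]_n) : (S_mx Phis)^T = S_mx Phis.
Proof. by rewrite /S_mx trmx_mul trmxK. Qed.

Lemma qform_S_mx_ge0 vs (Phis : 'I_vs -> 'cV[R]_n) x : 0 <= qform (S_mx Phis) x.
Proof. by rewrite /S_mx -{1}[rec_mx Phis]trmxK -sqnorm_mulmx sqnorm_ge0. Qed.

Section ErrorDynamics.
Variables (vs : nat) (Phis : 'I_vs -> 'cV[R]_n) (ys : 'I_vs -> R).
Variables (Phi : nat -> 'cV[R]_n) (y : nat -> R) (Theta : 'cV[R]_n).
Hypothesis ys_exact : forall m, ys m = dotv Theta (Phis m).
Hypothesis y_exact : forall k, y k = dotv Theta (Phi k).

Lemma cl_est_errorS theta0 k :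
  let e := cl_est Phis ys Phi y theta0 k - Theta in
  cl_est Phis ys Phi y theta0 k.+1 - Theta =
    e - cl_eta Phis (Phi k) *: ((S_mx Phis + U_mx (Phi k)) *m e).
Proof.
rewrite /=; set th := cl_est _ _ _ _ _ _; set eta := cl_eta _ _.
have -> : \sum_(m < vs) (dotv th (Phis m) - ys m) *: Phis m = S_mx Phis *m (th - Theta).
  rewrite S_mx_sum mulmx_suml; apply: eq_bigr => m _.
  by rewrite ys_exact dotvBl dotv_scale_U_mx.
rewrite y_exact dotvBl dotv_scale_U_mx mulmxDl scalerDr.
set a := eta *: _; set b := eta *: _.
by rewrite opprD !addrA (addrAC th (- Theta)) (addrAC (th - a) (- Theta)).
Qed.

End ErrorDynamics.

End ConcurrentLearning.

Lemma lambda_max_U_mx (R : realType) n (P : 'cV[R]_n.+1) :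
  vnorm P = 1 -> lambda_max (U_mx P) = 1.
Proof.
move=> P1; have [max_eig le_max] := lambda_maxP (U_mx_sym P).
apply/le_anti; rewrite (eigenvalue_le_upper_bound (l := 1) (U_mx_sym P)) //=.
  have := le_max P; rewrite qform_U_mx bform1 -/(sqnorm P) sqnorm_vnorm1 //.
  by rewrite expr1n mulr1.
by move=> x; rewrite mul1r qform_U_mx_le.
Qed.

Lemma contraction_rate_bounds (R : realFieldType) (a c eta : R) :
  0 < a -> a < c -> 0 < eta -> eta * c < 2 -> 0 < 1 - eta * (2 - eta * c) * a < 1.
Proof.
move=> a_gt0 a_lt_c eta_gt0 eta_c_lt2.
have gain_gt0 : 0 < eta * (2 - eta * c) by rewrite mulr_gt0 // subr_gt0.
rewrite subr_gt0 gtrBl mulr_gt0 // andbT.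
have : c * (eta * (2 - eta * c)) <= 1 by have := sqr_ge0 (1 - eta * c); nra.
nra.
Qed.

Lemma cl_gain_lt2 (R : realFieldType) (a b : R) : 0 < a <= b ->
  a / (1 + b ^+ 2) * (b + 1) < 2.
Proof.
move=> /andP[a_gt0 a_le_b]; rewrite mulrAC ltr_pdivrMr ?ltr_pwDl ?sqr_ge0 //.
nra.
Qed.

Theorem theorem1 (R : realType) (Theta : 'cV[R]_7)
  (vs : nat) (Phis : 'I_vs -> 'cV[R]_7) (ys : 'I_vs -> R)
  (Phi : nat -> 'cV[R]_7) (y : nat -> R)
  (hPhis_unit : forall m, vnorm (Phis m) = 1)
  (hys : forall m, ys m = dotv Theta (Phis m))
  (hPhi_unit : forall k, vnorm (Phi k) = 1)
  (hy : forall k, y k = dotv Theta (Phi k))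
  (hS : \rank (S_mx Phis) = 7%N) :
  exists c rho : R, 1 <= c /\ 0 < rho < 1 /\
    forall (theta0 : 'cV[R]_7) (k : nat),
      vnorm (cl_est Phis ys Phi y theta0 k - Theta)
        <= c * rho ^+ k * vnorm (theta0 - Theta).
Proof.
have symS := S_mx_sym Phis; have psdS := qform_S_mx_ge0 Phis.
have S_unit : S_mx Phis \in unitmx by rewrite -row_free_unit /row_free hS.
have [a_eig a_le] := lambda_minP symS; have [_ le_b] := lambda_maxP symS.
set a := lambda_min _ in a_eig a_le; set b := lambda_max _ in le_b.
have a_gt0 : 0 < a := lambda_min_gt0 symS psdS S_unit.
have a_le_b : a <= b := eigenvalue_le_upper_bound symS le_b a_eig.
have etaE k : cl_eta Phis (Phi k) = a / (1 + b ^+ 2).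
  by rewrite /cl_eta lambda_max_U_mx.
set eta := a / (1 + b ^+ 2) in etaE.
have eta_gt0 : 0 < eta by rewrite divr_gt0 ?ltr_pwDl ?sqr_ge0.
have gain_lt2 : eta * (b + 1) < 2 by rewrite cl_gain_lt2 ?a_gt0.
have a_lt_b1 : a < b + 1 by rewrite ltr_pwDr.
have /andP[r_gt0 r_lt1] := contraction_rate_bounds a_gt0 a_lt_b1 eta_gt0 gain_lt2.
exists 1, (Num.sqrt (1 - eta * (2 - eta * (b + 1)) * a)).
split=> //; split; first by rewrite sqrtr_gt0 r_gt0 -[X in _ < X]sqrtr1 ltr_sqrt ?ltr01.
move=> theta0 k; rewrite mul1r.
apply: (vnorm_geometric_decay (e := fun j => cl_est Phis ys Phi y theta0 j - Theta)).
  exact: ltW.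
move=> j; rewrite cl_est_errorS // etaE; apply: sqnorm_gradient_step_le; rewrite ?ltW //.
- by rewrite linearD /= symS U_mx_sym.
- by move=> x; rewrite qformD -[a * _]addr0 lerD ?a_le // qform_U_mx sqr_ge0.
- by move=> x; rewrite qformD mulrDl mul1r lerD ?qform_U_mx_le.
- exact: lt_trans a_gt0 a_lt_b1.
Qed.
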